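(* Let $k$ be a field and $S=k[x_1,\dots,x_n]$. (1) Let $I\subseteq K\subseteq S$ and $J\subseteq L\subseteq S$ be monomial ideals with $\dim_k S/I<\infty$, $\dim_k S/J<\infty$, and let $\phi\colon K/I\to L/J$ be an $S$-module isomorphism sending monomials to monomials. Let $\lambda$ (resp. $\mu$) be the $n$-dimensional Young diagram corresponding to $I$ (resp. $J$). Then there exist connected abstract skew shapes $\nu_1,\dots,\nu_r$ and lattice points $b_1,\dots,b_r,c_1,\dots,c_r\in\mathbb{Z}^n$ such that $\nu_1+b_1,\dots,\nu_r+b_r$ are exactly the connected components of the skew shape associated with $K/I$, $\nu_1+c_1,\dots,\nu_r+c_r$ are exactly the connected components of the skew shape associated with $L/J$, $\phi(x^{v+b_i})=x^{v+c_i}$ for all $i$ and $v\in\nu_i$, and the following hold: (a) $\nu_1+b_1,\dots,\nu_r+b_r$ are pairwise disjoint and contained in $\lambda$; (b) for all $w\in\mathbb{N}^n$ and all $v_i\in\nu_i$ with $v_i+b_i+w\in\lambda$, we have $v_i+w\in\nu_i$; (c) $\nu_1+c_1,\dots,\nu_r+c_r$ are pairwise disjoint and contained in $\mu$; (d) for all $w\in\mathbb{N}^n$ and all $v_i\in\nu_i$ with $v_i+c_i+w\in\mu$, we have $v_i+w\in\nu_i$. (2) Conversely, given $n$-dimensional Young diagrams $\lambda,\mu$, connected abstract skew shapes $\nu_1,\dots,\nu_r$ and lattice points $b_1,\dots,b_r,c_1,\dots,c_r\in\mathbb{Z}^n$ satisfying (a)–(d), there exist monomial ideals $I\subseteq K$,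 $J\subseteq L$ of $S$ with $\dim_k S/I,\dim_k S/J<\infty$ and an $S$-module isomorphism $\phi\colon K/I\to L/J$ sending monomials to monomials, such that $\lambda$ (resp. $\mu$) is the Young diagram corresponding to $I$ (resp. $J$), the connected components of the skew shape of $K/I$ (resp. $L/J$) are the $\nu_i+b_i$ (resp. $\nu_i+c_i$), and $\phi(x^{v+b_i})=x^{v+c_i}$ for all $i$ and $v\in\nu_i$.
   Context: Monomials $x^a=x_1^{a_1}\cdots x_n^{a_n}$ are identified with $a\in\mathbb{N}^n$, which carries the componentwise partial order. An $n$-dimensional Young diagram is a finite subset $\lambda\subseteq\mathbb{N}^n$ such that $w\in\lambda$ and $v\le w$ imply $v\in\lambda$; the Young diagram corresponding to a monomial ideal $I$ with $\dim_k S/I<\infty$ is $\{a\in\mathbb{N}^n : x^a\notin I\}$. The skew shape associated with $K/I$ (for monomial ideals $I\subseteq K$) is $\{a : x^a\in K,\ x^a\notin I\}$; a skew shape is a difference $\lambda\setminus\lambda'$ of two Young diagrams. A set $\epsilon$ is connected if for any $a,b\in\epsilon$ there exist $a',b'\in\mathbb{N}^n$ with $a+a'=b+b'\in\epsilon$; every skew shape decomposes uniquely as a disjoint union of connected ones (its connected components). Each skew shape $\nu$ has a unique lexicographically smallest point $\ell_\nu$; an abstract skew shape is a set of the form $\nu-\ell_\nu\subseteq\mathbb{Z}^n$ for a skew shape $\nu$, and it is connected if $\nu$ is. An isomorphism $\phi\colon K/I\to L/J$ sends monomials to monomials if it maps the class of each monomial of $K$ not in $I$ to the class of a monomial of $L$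 not in $J$. *)

From HB Require Import structures.
From mathcomp Require Import all_boot all_order all_algebra.
From mathcomp Require Import mpoly.
From Stdlib Require Import Relations.
Set Implicit Arguments. Unset Strict Implicit. Unset Printing Implicit Defensive.
Import Order.TTheory GRing.Theory Num.Theory.
Local Open Scope ring_scope.

Definition zpt (n : nat) := {ffun 'I_n -> int}.
Definition zset (n : nat) := zpt n -> Prop.

Definition zseteq n (A B : zset n) := forall x, A x <-> B x.

Definition mz n (m : 'X_{1..n}) : zpt n := [ffun i => (m i)%:Z].

Definition nonneg n (a : zpt n) := forall i, 0 <= a i.
Definition zle n (a b : zpt n) := forall i, a i <= b i.
Definition lexle n (a b : zpt n) :=
  a = b \/ exists i : 'I_n, a i < b i /\ forall j : 'I_n, (j < i)%N -> a j = b j.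

Definition shift n (A : zset n) (b : zpt n) : zset n := fun x => A (x - b).

Definition zfinite n (A : zset n) := exists s : seq (zpt n), forall x, A x -> x \in s.

Definition young n (lam : zset n) :=
  [/\ zfinite lam, (forall w, lam w -> nonneg w) &
      (forall v w, nonneg v -> zle v w -> lam w -> lam v)].

Definition skew n (eps : zset n) :=
  exists lam lam' : zset n, [/\ young lam, young lam' &
    zseteq eps (fun x => lam x /\ ~ lam' x)].

Definition linked n (eps : zset n) (a b : zpt n) :=
  [/\ eps a, eps b & exists a' b', [/\ nonneg a', nonneg b',
        a + a' = b + b' & eps (a + a')]].

Definition connected n (eps : zset n) :=
  forall a b, eps a -> eps b -> clos_refl_trans (zpt n) (linked eps) a b.

Definition component n (eps C : zset n) :=
  exists a, eps a /\
    zseteq C (fun b => eps b /\ clos_refl_trans (zpt n) (linked eps) a b).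

Definition conn_abs_skew n (nu : zset n) :=
  exists (mu : zset n) (l : zpt n),
    [/\ skew mu, connected mu, mu l, (forall v, mu v -> lexle l v) &
        zseteq nu (shift mu (- l))].

Definition components_are n (eps : zset n) r (nu : 'I_r -> zset n) (b : 'I_r -> zpt n) :=
  (forall i, component eps (shift (nu i) (b i))) /\
  (forall C, component eps C -> exists i, zseteq C (shift (nu i) (b i))).

Definition cond_disj_in n (lam : zset n) r (nu : 'I_r -> zset n) (b : 'I_r -> zpt n) :=
  (forall i j, i != j -> forall x, ~ (shift (nu i) (b i) x /\ shift (nu j) (b j) x)) /\
  (forall i x, shift (nu i) (b i) x -> lam x).

Definition cond_closed n (lam : zset n) r (nu : 'I_r -> zset n) (b : 'I_r -> zpt n) :=
  forall i w v, nonneg w -> nu i v -> lam (v + b i + w) -> nu i (v + w).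

Section Poly.
Variables (k : fieldType) (n : nat).
Local Notation S := {mpoly k[n]}.
Definition pset := S -> Prop.

Definition ideal (I : pset) :=
  [/\ I 0, (forall f g, I f -> I g -> I (f + g)) & (forall s f, I f -> I (s * f))].

Definition monomial_ideal (I : pset) :=
  ideal I /\ forall f, I f -> exists ps : seq (S * 'X_{1..n}),
    (forall p, p \in ps -> I 'X_[p.2]) /\ f = \sum_(p <- ps) p.1 * 'X_[p.2].

Definition psubset (I K : pset) := forall f, I f -> K f.

Definition fin_codim (I : pset) :=
  exists B : seq S, forall f, exists c : seq k,
    I (f - \sum_(i < size B) c`_i *: B`_i).

Definition young_of (I : pset) : zset n :=
  fun a => exists m : 'X_{1..n}, mz m = a /\ ~ I 'X_[m].
Definition skew_of (K I : pset) : zset n :=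
  fun a => exists m : 'X_{1..n}, [/\ mz m = a, K 'X_[m] & ~ I 'X_[m]].

(* An S-module homomorphism K/I -> L/J, represented by a lift phi : S -> S
   (only its values on K matter); it is an isomorphism when bijective on classes. *)
Definition quot_iso (K I L J : pset) (phi : S -> S) :=
  [/\ (forall f, K f -> L (phi f)),
      (forall f g, K f -> K g -> J (phi (f + g) - (phi f + phi g))) /\
      (forall s f, K f -> J (phi (s * f) - s * phi f)),
      (forall f, I f -> J (phi f)),
      (forall f, K f -> J (phi f) -> I f) &
      (forall g, L g -> exists f, K f /\ J (phi f - g))].

Definition sends_monomials (K I L J : pset) (phi : S -> S) :=
  forall m : 'X_{1..n}, K 'X_[m] -> ~ I 'X_[m] ->
    exists m' : 'X_{1..n}, [/\ L 'X_[m'], ~ J 'X_[m'] & J (phi 'X_[m] - 'X_[m'])].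

Definition phi_matches (J : pset) (phi : S -> S) r (nu : 'I_r -> zset n)
    (b c : 'I_r -> zpt n) :=
  forall i v (m m' : 'X_{1..n}), nu i v -> mz m = v + b i -> mz m' = v + c i ->
    J (phi 'X_[m] - 'X_[m']).
End Poly.

From Pilot Require Import Defs.
From HB Require Import structures.
From mathcomp Require Import all_boot all_order all_algebra.
From mathcomp Require Import mpoly.
From mathcomp Require Import ring.
From Stdlib Require Import Relations Classical ClassicalEpsilon.
Set Implicit Arguments. Unset Strict Implicit. Unset Printing Implicit Defensive.
Import Order.TTheory GRing.Theory Num.Theory.
Local Open Scope ring_scope.

(* On standard monomials, an isomorphism [phi : K/I -> L/J] sending monomials to monomials
   is a bijection [sig] from the skew shape of [K/I] onto that of [L/J].  S-linearity gives
   [sig (a + w) = sig a + w] as long as [a + w] stays in the Young diagram of [I], and forces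
   [sig a + w] out of the diagram of [J] when [a + w] leaves that of [I].  Hence [sig a - a]
   is constant along linked points, i.e. on each connected component; translating every
   component by its lexicographically smallest point gives the [nu_i], [b_i], [c_i], and the
   two facts above become conditions (b) and (d).  Conversely, for such data let [I], [J] be
   spanned by the monomials outside [lam], [mu], let [K], [L] add the monomials of the shifted
   shapes, and let [phi] send [x^(v + b_i)] to [x^(v + c_i)] and every other monomial to 0:
   conditions (b) and (d) are exactly what makes [phi] S-linear modulo [J]. *)

Lemma partial_choice (T U : Type) (u0 : U) (P : T -> Prop) (R : T -> U -> Prop) :
  (forall t, P t -> exists u, R t u) -> exists f : T -> U, forall t, P t -> R t (f t).
Proof.
move=> PR; apply: (choice (fun t u => P t -> R t u)) => t.
by case: (classic (P t)) => [/PR[u Ru]|nPt]; [exists u | exists u0].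
Qed.

Lemma sumr_neq0P (V : nmodType) (T : eqType) (s : seq T) (F : T -> V) :
  \sum_(t <- s) F t != 0 -> exists2 t, t \in s & F t != 0.
Proof.
move=> Hs; apply: NNPP => Hno; move: Hs; rewrite big1_seq ?eqxx // => t /andP[_ ts].
by apply/eqP/negPn/negP => Ft; apply: Hno; exists t.
Qed.

Lemma eq_subr_of_addr (V : zmodType) (a x a' x' w w' : V) :
  a + w = a' + w' -> x + w = x' + w' -> a - x = a' - x'.
Proof. by move=> Ea Ex; rewrite -(addrKA w) [w + x]addrC Ea Ex -(addrKA w' a') [w' + x']addrC. Qed.

Lemma uniq_sublist (T : eqType) (P : T -> Prop) (s : seq T) :
  (forall x, P x -> x \in s) -> exists2 l, uniq l & forall x, x \in l <-> P x.
Proof.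
elim: s P => [|y s IH] P Hs; first by exists [::] => // x; split=> // /Hs.
have [l ul Hl] : exists2 l, uniq l & forall x, x \in l <-> P x /\ x <> y.
  by apply: IH => x [/Hs + xy]; rewrite inE => /orP[/eqP|].
case: (classic (P y)) => Py; last first.
  by exists l => // x; rewrite Hl; split=> [[]//|Px]; split=> // xy; subst x.
exists (y :: l) => [|x]; first by rewrite /= ul andbT; apply/negP => /Hl[].
rewrite inE; split=> [/orP[/eqP->//|/Hl[]//]|Px].
by case: (eqVneq x y) => [//|/eqP xy]; apply/orP; right; apply/Hl.
Qed.

Section FiniteQuotient.
Variables (T : eqType) (x0 : T) (P : T -> Prop) (R : T -> T -> Prop).
Hypotheses (R_refl : forall x, R x x) (R_sym : forall x y, R x y -> R y x).

Lemma representatives (s : seq T) : (forall x, P x -> x \in s) ->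
  exists r (rep : 'I_r -> T), [/\ forall i, P (rep i),
    forall i j, R (rep i) (rep j) -> i = j & forall x, P x -> exists i, R (rep i) x].
Proof.
move=> Ps; suff [rs [Prs Rrs covrs]] : exists rs : seq T, [/\ forall y, y \in rs -> P y,
    forall i j, (i < size rs)%N -> (j < size rs)%N -> R (nth x0 rs i) (nth x0 rs j) -> i = j &
    forall x, P x -> x \in s -> exists2 y, y \in rs & R y x].
  exists (size rs), (fun i => nth x0 rs i); split=> [i|i j /Rrs Eij|x Px].
  - by apply: Prs; rewrite mem_nth.
  - by apply: val_inj; apply: Eij.
  have [y yrs Ryx] := covrs x Px (Ps x Px).
  have yi : (index y rs < size rs)%N by rewrite index_mem.
  by exists (Ordinal yi); rewrite /= nth_index.
elim: s {Ps} => [|x s [rs [Prs Rrs covrs]]]; first by exists [::].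
case: (classic (P x /\ forall y, y \in rs -> ~ R y x)) => [[Px newx]|oldx]; last first.
  exists rs; split=> // y Py; rewrite inE => /orP[/eqP yx|]; last exact: covrs.
  subst y; apply: NNPP => Hno; apply: oldx; split=> // y yrs Ryx; apply: Hno.
  by exists y.
exists (rcons rs x); split.
- by move=> y; rewrite mem_rcons inE => /orP[/eqP->|/Prs].
- move=> i j; rewrite size_rcons !ltnS !nth_rcons => ilt jlt.
  case: (ltnP i (size rs)) => ilt'; case: (ltnP j (size rs)) => jlt'.
  + exact: Rrs.
  + have -> : j = size rs by apply/eqP; rewrite eqn_leq jlt jlt'.
    by rewrite eqxx => /(newx _ (mem_nth x0 ilt')).
  + have -> : i = size rs by apply/eqP; rewrite eqn_leq ilt ilt'.
    by rewrite eqxx => /R_sym /(newx _ (mem_nth x0 jlt')).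
  + by move=> _; apply/eqP; rewrite eqn_leq (leq_trans ilt jlt') (leq_trans jlt ilt').
- move=> y Py; rewrite inE => /orP[/eqP->|ys].
    by exists x; rewrite ?mem_rcons ?mem_head.
  by have [z zrs Rzy] := covrs y Py ys; exists z; rewrite // mem_rcons inE zrs orbT.
Qed.

End FiniteQuotient.

Section LatticePoints.
Variable n : nat.
Implicit Types (m w : 'X_{1..n}) (x y : zpt n).

Definition mnm_of_zpt x : 'X_{1..n} := [multinom `|x i|%N | i < n].

Lemma mzE m i : mz m i = (m i)%:Z. Proof. by rewrite ffunE. Qed.

Lemma mz_nonneg m : nonneg (mz m). Proof. by move=> i; rewrite mzE. Qed.

Lemma mnm_of_zptK x : nonneg x -> mz (mnm_of_zpt x) = x.
Proof. by move=> x_ge0; apply/ffunP => i; rewrite mzE mnmE gez0_abs. Qed.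

Lemma mzK : cancel (@mz n) mnm_of_zpt.
Proof. by move=> m; apply/mnmP => i; rewrite mnmE mzE. Qed.

Lemma mz_inj : injective (@mz n). Proof. exact: can_inj mzK. Qed.

Lemma mzD m w : mz (m + w)%MM = mz m + mz w.
Proof. by apply/ffunP => i; rewrite !ffunE mnmDE. Qed.

Lemma nonneg_mzP x : nonneg x -> exists m, mz m = x.
Proof. by move=> x_ge0; exists (mnm_of_zpt x); rewrite mnm_of_zptK. Qed.

Lemma zle_mz m w : zle (mz m) (mz w) <-> (m <= w)%MM.
Proof.
split=> [le_mw|/mnm_lepP le_mw i]; last by rewrite !mzE lez_nat.
by apply/mnm_lepP => i; have := le_mw i; rewrite !mzE lez_nat.
Qed.

Lemma zle_subr_nonneg x y : zle x y -> nonneg (y - x).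
Proof. by move=> le_xy i; rewrite !ffunE subr_ge0. Qed.

End LatticePoints.

Section Ideals.
Variables (k : fieldType) (n : nat).
Local Notation S := {mpoly k[n]}.
Variable I : pset k n.
Hypothesis idI : ideal I.
Implicit Types (f g : S).

Lemma ideal0 : I 0. Proof. by case: idI. Qed.

Lemma idealD f g : I f -> I g -> I (f + g). Proof. by case: idI => _ D _; apply: D. Qed.

Lemma idealMl s f : I f -> I (s * f). Proof. by case: idI => _ _ M; apply: M. Qed.

Lemma idealZ c f : I f -> I (c *: f). Proof. by rewrite -mul_mpolyC; apply: idealMl. Qed.

Lemma idealN f : I f -> I (- f). Proof. by rewrite -scaleN1r; apply: idealZ. Qed.

Lemma idealB f g : I f -> I g -> I (f - g). Proof. by move=> If /idealN; apply: idealD. Qed.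

Lemma ideal_sum (T : eqType) (s : seq T) (F : T -> S) :
  (forall t, t \in s -> I (F t)) -> I (\sum_(t <- s) F t).
Proof.
elim: s => [|x s IH] Is; first by rewrite big_nil; apply: ideal0.
rewrite big_cons; apply: idealD; first by apply: Is; rewrite mem_head.
by apply: IH => t ts; apply: Is; rewrite inE ts orbT.
Qed.

End Ideals.

Section MonomialIdeals.
Variables (k : fieldType) (n : nat).
Local Notation S := {mpoly k[n]}.
Implicit Types (I : pset k n) (f : S) (m w u : 'X_{1..n}).

Lemma monomial_ideal_coef I f u : monomial_ideal I -> I f -> f@_u != 0 -> I 'X_[u].
Proof.
case=> idI rep If; have [ps [Ips ->]] := rep f If.
rewrite raddf_sum => /sumr_neq0P[p pps].
rewrite -mcoeff_msupp (perm_mem (msuppMX _ _)) => /mapP[m' _ ->].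
by rewrite addmC mpolyXD; apply: idealMl => //; apply: Ips.
Qed.

Lemma monomial_idealXD I m w : monomial_ideal I -> I 'X_[m] -> I 'X_[m + w].
Proof. by case=> idI _ Im; rewrite addmC mpolyXD; apply: idealMl. Qed.

Lemma monomial_ideal_eqX I m m' :
  monomial_ideal I -> I ('X_[m] - 'X_[m']) -> ~ I 'X_[m] -> m = m'.
Proof.
move=> mI Imm' Im; apply: NNPP => ne; apply: Im; apply: (monomial_ideal_coef mI Imm').
by rewrite mcoeffB !mcoeffX eqxx; case: (eqVneq m' m) => [/esym//|_]; rewrite subr0 oner_eq0.
Qed.

Definition supp_ideal (P : 'X_{1..n} -> Prop) : pset k n :=
  fun f => forall u, f@_u != 0 -> P u.

Lemma supp_idealX P u : supp_ideal P 'X_[u] <-> P u.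
Proof.
split=> [|Pu v]; first by apply; rewrite mcoeffX eqxx oner_eq0.
by rewrite mcoeffX; case: (eqVneq u v) => [<-//|_]; rewrite eqxx.
Qed.

Lemma supp_ideal_monomial P :
  (forall u w, P u -> P (u + w)%MM) -> monomial_ideal (supp_ideal P).
Proof.
move=> Pup; split; first split.
- by move=> u; rewrite mcoeff0 eqxx.
- move=> f g Pf Pg u; rewrite mcoeffD; case: (eqVneq f@_u 0) => [->|/Pf//].
  by rewrite add0r => /Pg.
- move=> s f Pf u; rewrite -mcoeff_msupp => /msuppM_le/allpairsP[[m1 m2] /= [_ m2f ->]].
  by rewrite addmC; apply/Pup/Pf; rewrite -mcoeff_msupp.
move=> f Pf; exists [seq ((f@_u)%:MP, u) | u <- msupp f]; split.
  by move=> p /mapP[u uf ->]; apply/supp_idealX/Pf; rewrite -mcoeff_msupp.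
by rewrite big_map {1}(mpolyE f); apply: eq_bigr => u _; rewrite mul_mpolyC.
Qed.

Lemma mcoeff_sumX (T : eqType) (s : seq T) (a : T -> k) (h : T -> 'X_{1..n}) u :
  (\sum_(t <- s) a t *: 'X_[h t] : S)@_u = \sum_(t <- s | h t == u) a t.
Proof.
rewrite raddf_sum [RHS]big_mkcond; apply: eq_bigr => t _ /=.
by rewrite mcoeffZ mcoeffX; case: eqP; rewrite ?mulr1 ?mulr0.
Qed.

Lemma mcoeff_sumX_neq0 (T : eqType) (s : seq T) (a : T -> k) (h : T -> 'X_{1..n}) u :
  (\sum_(t <- s) a t *: 'X_[h t] : S)@_u != 0 -> exists t, [/\ t \in s, a t != 0 & h t = u].
Proof.
rewrite mcoeff_sumX big_mkcond => /sumr_neq0P[t ts].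
by case: (eqVneq (h t) u) => [<-|_]; [exists t | rewrite eqxx].
Qed.

Lemma mcoeff_sumX_inj (T : eqType) (s : seq T) (a : T -> k) (h : T -> 'X_{1..n}) t0 :
  uniq s -> t0 \in s -> {in s &, injective h} ->
  (\sum_(t <- s) a t *: 'X_[h t] : S)@_(h t0) = a t0.
Proof.
move=> us t0s hinj; rewrite mcoeff_sumX big_mkcond (bigD1_seq t0) //= eqxx.
rewrite big1_seq ?addr0 // => t /andP[tt0 ts].
by case: (eqVneq (h t) (h t0)) => // /(hinj _ _ ts t0s) eq_tt0; rewrite eq_tt0 eqxx in tt0.
Qed.

End MonomialIdeals.

Section FiniteCodimension.
Variables (k : fieldType) (n : nat).
Local Notation S := {mpoly k[n]}.
Variable I : pset k n.
Hypothesis mI : monomial_ideal I.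

Lemma standard_monomials_size (B : seq S) (s : seq 'X_{1..n}) :
  (forall f, exists c : seq k, I (f - \sum_(i < size B) c`_i *: B`_i)) ->
  uniq s -> (forall u, u \in s -> ~ I 'X_[u]) -> (size s <= size B)%N.
Proof.
move=> spanB us std_s; rewrite leqNgt; apply/negP => ltBs.
have idI : ideal I by case: mI.
pose N := size B; pose m := size s; pose X j : S := 'X_[nth 0%MM s j].
have [cf Hcf] := choice (fun (f : S) (c : seq k) => I (f - \sum_(i < N) c`_i *: B`_i)) spanB.
pose M : 'M[k]_(m, N) := \matrix_(j, i) (cf (X j))`_i.
have [a aM a_neq0] : exists2 a : 'rV_m, a *m M = 0 & a != 0.
  apply: NNPP => Hno; have : row_free M.
    by apply: inj_row_free => a aM; apply: NNPP => /eqP a0; apply: Hno; exists a.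
  by rewrite /row_free => /eqP rkM; have := rank_leq_col M; rewrite rkM leqNgt ltBs.
have [j0 aj0_neq0] : exists j0, a 0 j0 != 0.
  apply: NNPP => Hno; move/eqP: a_neq0; apply; apply/rowP => j; rewrite mxE.
  by apply: NNPP => /eqP aj; apply: Hno; exists j.
pose g : S := \sum_(j < m) a 0 j *: X j.
have Ig : I g.
  (* [a *m M = 0]: the combination of the chosen representatives of the [X j] vanishes *)
  have -> : g = \sum_(j < m) a 0 j *: (X j - \sum_(i < N) (cf (X j))`_i *: B`_i).
    under [RHS]eq_bigr => j _ do rewrite scalerBr scaler_sumr.
    rewrite sumrB exchange_big /= [X in _ - X]big1 ?subr0 // => i _.
    under eq_bigr => j _ do rewrite scalerA.
    have := congr1 (fun v : 'rV_N => v 0 i) aM; rewrite !mxE => aMi.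
    rewrite -scaler_suml; suff -> : \sum_(j < m) a 0 j * (cf (X j))`_i = 0 by rewrite scale0r.
    by rewrite -[RHS]aMi; apply: eq_bigr => j _; rewrite mxE.
  by apply: ideal_sum => // j' _; apply: idealZ.
apply: (std_s (nth 0%MM s j0)); first by rewrite mem_nth.
apply: (monomial_ideal_coef mI Ig).
rewrite /g (@mcoeff_sumX_inj _ _ _ _ _ (fun j : 'I_m => nth 0%MM s j)) //.
- exact: index_enum_uniq.
- exact: mem_index_enum.
by move=> j1 j2 _ _ /eqP; rewrite nth_uniq // => /eqP/val_inj.
Qed.

Lemma fin_codim_standard_finite : fin_codim I ->
  exists s : seq 'X_{1..n}, forall u, ~ I 'X_[u] -> u \in s.
Proof.
move=> [B spanB]; apply: NNPP => Hinf.
suff [s [us size_s std_s]] : exists s : seq 'X_{1..n},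
    [/\ uniq s, size s = (size B).+1 & forall u, u \in s -> ~ I 'X_[u]].
  by have := standard_monomials_size spanB us std_s; rewrite size_s ltnn.
elim: (size B).+1 => [|N [s [us size_s std_s]]]; first by exists [::].
have [u Iu us'] : exists2 u, ~ I 'X_[u] & u \notin s.
  apply: NNPP => Hno; apply: Hinf; exists s => u Iu; apply: NNPP => /negP us'.
  by apply: Hno; exists u.
by exists (u :: s); split; rewrite /= ?us' ?us ?size_s // => v; rewrite inE => /orP[/eqP->|/std_s].
Qed.

End FiniteCodimension.

Section YoungOf.
Variables (k : fieldType) (n : nat) (K I : pset k n).
Hypotheses (mK : monomial_ideal K) (mI : monomial_ideal I).

Lemma young_of_young : fin_codim I -> young (young_of I).
Proof.
move=> /(fin_codim_standard_finite mI)[s std_s]; split.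
- by exists (map (@mz n) s) => x [m [<- Im]]; apply/map_f/std_s.
- by move=> x [m [<- _]]; apply: mz_nonneg.
move=> x y x_ge0 le_xy [m [Em Im]]; have [m' Em'] := nonneg_mzP x_ge0.
exists m'; split=> // Im'; apply: Im.
rewrite -Em -Em' in le_xy; move/zle_mz: le_xy => le_m'm.
by rewrite -(submK le_m'm) addmC; apply: monomial_idealXD.
Qed.

Lemma skew_of_young x : skew_of K I x -> young_of I x.
Proof. by case=> m [<- _ Im]; exists m. Qed.

Lemma skew_of_up x y : skew_of K I x -> nonneg y -> young_of I (x + y) -> skew_of K I (x + y).
Proof.
case=> m [<- Km _] y_ge0 [m' [Em' Im']]; have [w Ew] := nonneg_mzP y_ge0; subst y.
rewrite -mzD in Em' *; rewrite (mz_inj Em') in Im'.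
by exists (m + w)%MM; split=> //; apply: monomial_idealXD.
Qed.

End YoungOf.

Section SuppIdeals.
Variables (k : fieldType) (n : nat).
Local Notation S := {mpoly k[n]}.

Lemma fin_codim_supp_ideal (P : 'X_{1..n} -> Prop) (s : seq 'X_{1..n}) :
  (forall u, ~ P u -> u \in s) -> fin_codim (supp_ideal (k := k) P).
Proof.
move=> Ps; pose s' := undup s; exists [seq ('X_[u] : S) | u <- s'] => f.
exists [seq f@_u | u <- s'] => u coef_neq0; apply: NNPP => Pu; move/eqP: coef_neq0; apply.
have us' : uniq s' by apply: undup_uniq.
have s'u : u \in s' by rewrite mem_undup; apply: Ps.
have -> : \sum_(i < size [seq ('X_[u] : S) | u <- s'])
    [seq f@_u | u <- s']`_i *: [seq ('X_[u] : S) | u <- s']`_i =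
    \sum_(v <- s') f@_v *: 'X_[v].
  rewrite (big_nth 0%MM) big_mkord size_map; apply: eq_bigr => i _.
  by rewrite !(nth_map 0%MM).
by rewrite mcoeffB (@mcoeff_sumX_inj _ _ _ _ _ id) ?subrr.
Qed.

Lemma ideal_linear_image (F : S -> S) (J : pset k n) (Q : 'X_{1..n} -> Prop) f :
  (forall f g, F (f + g) = F f + F g) -> (forall c f, F (c *: f) = c *: F f) ->
  ideal J -> (forall u, Q u -> J (F 'X_[u])) -> supp_ideal Q f -> J (F f).
Proof.
move=> FD FZ idJ JFQ Qf.
have F0 : F 0 = 0 by apply: (addrI (F 0)); rewrite -FD !addr0.
have Qs u : u \in msupp f -> Q u by rewrite mcoeff_msupp => /Qf.
rewrite (mpolyE f); elim: (msupp f) Qs => [|u s IH] Qs; first by rewrite big_nil F0; apply: ideal0.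
rewrite big_cons FD FZ; apply: idealD => //.
  by apply: idealZ => //; apply/JFQ/Qs; rewrite mem_head.
by apply: IH => v vs; apply: Qs; rewrite inE vs orbT.
Qed.

End SuppIdeals.

Section Connectedness.
Variable n : nat.
Implicit Types (eps A B : zset n) (a b x y t : zpt n).
Local Notation rt eps := (clos_refl_trans (zpt n) (linked eps)).

Lemma linked_sym eps a b : linked eps a b -> linked eps b a.
Proof. by case=> epsa epsb [a' [b' [? ? Eab ?]]]; split=> //; exists b', a'; rewrite -Eab. Qed.

Lemma rt_linked_sym eps a b : rt eps a b -> rt eps b a.
Proof.
elim=> [x y /linked_sym|x|x y z _ IHxy _ IHyz]; [exact: rt_step | exact: rt_refl |].
exact: rt_trans IHyz IHxy.
Qed.

Lemma rt_linked_sub A eps a b : (forall x, A x -> eps x) -> rt A a b -> rt eps a b.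
Proof.
move=> subA; elim=> [x y [Ax Ay [x' [y' [? ? ? ?]]]]|x|x y z _ IHxy _ IHyz].
- apply: rt_step; split; try exact: subA.
  by exists x', y'; split=> //; apply: subA.
- exact: rt_refl.
- exact: rt_trans IHxy IHyz.
Qed.

Lemma rt_linked_closed eps A a b : (forall x y, linked eps x y -> A x -> A y) ->
  rt eps a b -> A a -> A b.
Proof. by move=> Astep; elim=> [x y /Astep|x|x y z _ IHxy _ IHyz] // /IHxy. Qed.

Lemma rt_linked_restrict eps A a b : (forall x y, linked eps x y -> A x -> linked A x y) ->
  rt eps a b -> A a -> rt A a b.
Proof.
move=> Astep /clos_rt_rt1n_iff; elim=> [x|x y z /Astep xy _ IH] Ax; first exact: rt_refl.
have lxy := xy Ax; have [_ Ay _] := lxy.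
by apply: (@rt_trans _ _ x y z); [exact: rt_step | exact: IH].
Qed.

Lemma connected_translate A B t : connected A -> (forall x, B x <-> A (x + t)) -> connected B.
Proof.
move=> connA AB a b Ba Bb.
have shift_rt p q : rt A p q -> rt B (p - t) (q - t).
  elim=> [x y [Ax Ay [x' [y' [? ? Exy Ax']]]]|x|x y z _ IHxy _ IHyz].
  - apply: rt_step; split; try by apply/AB; rewrite subrK.
    exists x', y'; split=> //; first by rewrite addrAC Exy addrAC.
    by apply/AB; rewrite addrAC subrK.
  - exact: rt_refl.
  - exact: rt_trans IHxy IHyz.
by have := shift_rt _ _ (connA _ _ (proj1 (AB a) Ba) (proj1 (AB b) Bb)); rewrite !addrK.
Qed.

Lemma components_areP eps r (nu : 'I_r -> zset n) (b : 'I_r -> zpt n) :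
  let A i := shift (nu i) (b i) in
  (forall x, eps x <-> exists i, A i x) ->
  (forall i j x, A i x -> A j x -> i = j) ->
  (forall i, exists x, A i x) ->
  (forall i, connected (A i)) ->
  (forall i a w, A i a -> nonneg w -> eps (a + w) -> A i (a + w)) ->
  components_are eps nu b.
Proof.
move=> A cover disj nonempty connA Aup.
have epsA i x : A i x -> eps x by move=> Aix; apply/cover; exists i.
have Astep i x y : linked eps x y -> A i x -> A i y.
  case=> _ epsy [x' [y' [x'_ge0 y'_ge0 Exy epsxy]]] Aix.
  have [j Ajy] := proj1 (cover y) epsy.
  have Aixy := Aup _ _ _ Aix x'_ge0 epsxy; rewrite Exy in epsxy Aixy.
  by rewrite (disj _ _ _ Aixy (Aup _ _ _ Ajy y'_ge0 epsxy)).
have compA i a : A i a -> zseteq (A i) (fun x => eps x /\ rt eps a x).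
  move=> Aia x; split=> [Aix|[_ rax]]; last exact: rt_linked_closed (Astep i) rax Aia.
  by split; [exact: epsA Aix | apply: rt_linked_sub (connA i a x Aia Aix); exact: epsA].
split=> [i|C [a [epsa Ca]]].
  by have [x Aix] := nonempty i; exists x; split; [exact: epsA Aix | exact: compA].
have [i Aia] := proj1 (cover a) epsa; exists i => x.
by rewrite Ca; apply: iff_sym; apply: compA.
Qed.

End Connectedness.

Section Lex.
Variable n : nat.
Implicit Types (A : zset n) (a b c : zpt n).

Lemma lexle_refl a : lexle a a. Proof. by left. Qed.

Lemma lexle_total a b : lexle a b \/ lexle b a.
Proof.
case: (classic (a = b)) => [->|ne]; first by left; left.
have [i0 ai0] : exists i0, a i0 != b i0.
  apply: NNPP => Hno; apply: ne; apply/ffunP => i.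
  by apply: NNPP => /eqP abi; apply: Hno; exists i.
case: (@arg_minnP _ i0 (fun i => a i != b i) val ai0) => i abi imin.
have Eab (j : 'I_n) : (j < i)%N -> a j = b j.
  by move=> ji; apply: NNPP => /eqP /imin; rewrite leqNgt ji.
case: (ltgtP (a i) (b i)) => [ab|ba|/eqP]; last by rewrite (negbTE abi).
  by left; right; exists i.
by right; right; exists i; split=> // j /Eab.
Qed.

Lemma lexle_trans a b c : lexle a b -> lexle b c -> lexle a c.
Proof.
case=> [->//|[i [abi Eab]]]; case=> [<-|[j [bcj Ebc]]]; first by right; exists i.
right; case: (ltngtP i j) => ij.
- exists i; split; first by rewrite -(Ebc _ ij).
  by move=> l li; rewrite Eab // Ebc // (ltn_trans li ij).
- exists j; split; first by rewrite (Eab _ ij).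
  by move=> l lj; rewrite Eab ?Ebc // (ltn_trans lj ij).
- have ji : j = i by apply: val_inj.
  subst j; exists i; split; first exact: lt_trans abi bcj.
  by move=> l lj; rewrite Eab ?Ebc.
Qed.

Lemma lexle_min A (s : seq (zpt n)) : (forall x, A x -> x \in s) -> (exists x, A x) ->
  exists2 l, A l & forall v, A v -> lexle l v.
Proof.
elim: s A => [|x s IH] A As [y Ay]; first by have := As _ Ay.
case: (classic (exists2 z, A z & z <> x)) => [[z Az zx]|]; last first.
  move=> Ax; have {}Ax v : A v -> v = x by move=> Av; apply: NNPP => vx; apply: Ax; exists v.
  by exists x => [|v /Ax ->]; [rewrite -(Ax _ Ay) | exact: lexle_refl].
have [l [Al lx] lmin] : exists2 l, A l /\ l <> x & forall v, A v /\ v <> x -> lexle l v.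
  apply: IH; last by exists z.
  by move=> v [Av vx]; move: (As _ Av); rewrite inE => /orP[/eqP|].
have lmin' v : A v -> v <> x -> lexle l v by move=> Av vx; exact: lmin.
case: (classic (A x)) => [Ax|nAx]; last by exists l => // v Av; apply: lmin' => // vx; subst v.
case: (lexle_total x l) => [xl|lx']; last first.
  by exists l => // v Av; case: (classic (v = x)) => [->|]; [| exact: lmin'].
exists x => // v Av; case: (classic (v = x)) => [->|vx]; first exact: lexle_refl.
exact: lexle_trans xl (lmin' _ Av vx).
Qed.

End Lex.

Section YoungIdeals.
Variables (k : fieldType) (n : nat).
Implicit Types (lam E : zset n) (x : zpt n) (u w : 'X_{1..n}).

Definition young_ideal lam : pset k n := supp_ideal (fun u => ~ lam (mz u)).

Definition skew_ideal lam E : pset k n := supp_ideal (fun u => ~ lam (mz u) \/ E (mz u)).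

Variables (lam E : zset n).
Hypotheses (lam_young : young lam) (E_sub : forall x, E x -> lam x)
  (E_up : forall x (y : zpt n), E x -> nonneg y -> lam (x + y) -> E (x + y)).

Lemma young_nonneg x : lam x -> nonneg x.
Proof. by case: lam_young => _ + _; apply. Qed.

Lemma young_mz x : lam x -> exists m, mz m = x.
Proof. by move/young_nonneg/nonneg_mzP. Qed.

Lemma young_mzDl u w : lam (mz (u + w)%MM) -> lam (mz u).
Proof. by case: lam_young => _ _; apply; [exact: mz_nonneg | apply/zle_mz/lem_addr]. Qed.

Lemma young_ideal_monomial : monomial_ideal (young_ideal lam).
Proof. by apply: supp_ideal_monomial => u w lam'u /young_mzDl. Qed.

Lemma skew_ideal_monomial : monomial_ideal (skew_ideal lam E).
Proof.
apply: supp_ideal_monomial => u w [lam'u|Eu]; first by left => /young_mzDl.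
case: (classic (lam (mz (u + w)%MM))) => [lamuw|]; last by left.
by right; rewrite mzD; apply: E_up; rewrite -?mzD //; exact: mz_nonneg.
Qed.

Lemma young_ideal_sub_skew : psubset (young_ideal lam) (skew_ideal lam E).
Proof. by move=> f If u /If; left. Qed.

Lemma fin_codim_young_ideal : fin_codim (young_ideal lam).
Proof.
case: lam_young => [[s lam_s] _ _].
apply: (@fin_codim_supp_ideal _ _ _ [seq mnm_of_zpt x | x <- s]) => u /NNPP lamu.
by apply/mapP; exists (mz u); [apply: lam_s | rewrite mzK].
Qed.

Lemma young_of_young_ideal : zseteq lam (young_of (young_ideal lam)).
Proof.
move=> x; split=> [lamx|[m [<- /supp_idealX/NNPP//]]].
by have [m Em] := young_mz lamx; exists m; split=> //; rewrite /young_ideal supp_idealX Em.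
Qed.

Lemma skew_of_skew_ideal x : skew_of (skew_ideal lam E) (young_ideal lam) x <-> E x.
Proof.
split=> [[m [<- /supp_idealX[]// + /supp_idealX/NNPP]]|Ex]; first by [].
have [m Em] := young_mz (E_sub Ex); exists m.
split=> //; first by rewrite /skew_ideal supp_idealX Em; right.
by rewrite /young_ideal supp_idealX Em; apply; apply: E_sub.
Qed.

End YoungIdeals.
Arguments young_ideal k {n} lam.
Arguments skew_ideal k {n} lam E.

Section ShiftedShapes.
Variable n : nat.
Implicit Types (nu X : zset n) (x t : zpt n).

Definition shifts_union r (nu : 'I_r -> zset n) (b : 'I_r -> zpt n) : zset n :=
  fun x => exists i, shift (nu i) (b i) x.

Lemma conn_abs_skew0 nu : conn_abs_skew nu -> nu 0.
Proof. by case=> X [l [_ _ Xl _ nuE]]; apply/nuE; rewrite /shift sub0r opprK. Qed.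

Lemma connected_shift X t : connected X -> connected (shift X t).
Proof. by move=> connX; apply: (connected_translate (t := - t) connX). Qed.

Lemma conn_abs_skew_connected nu : conn_abs_skew nu -> connected nu.
Proof.
case=> X [l [_ connX _ _ nuE]].
apply: (connected_translate (t := 0) (connected_shift (t := - l) connX)) => x.
by rewrite addr0; apply: nuE.
Qed.

Variables (lam : zset n) (r : nat) (nu : 'I_r -> zset n) (b : 'I_r -> zpt n).
Hypotheses (nu_conn : forall i, conn_abs_skew (nu i))
  (disj_in : cond_disj_in lam nu b) (closed : cond_closed lam nu b).

Lemma shift_young i x : shift (nu i) (b i) x -> lam x.
Proof. by case: disj_in => _; apply. Qed.

Lemma shifts_union_young x : shifts_union nu b x -> lam x.
Proof. by case=> i; apply: shift_young. Qed.

Lemma shift_uniq i j x : shift (nu i) (b i) x -> shift (nu j) (b j) x -> i = j.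
Proof.
move=> nuix nujx; apply: NNPP => /eqP ij; case: disj_in => disj _.
exact: disj i j ij x (conj nuix nujx).
Qed.

Lemma shift_up i x w :
  shift (nu i) (b i) x -> nonneg w -> lam (x + w) -> shift (nu i) (b i) (x + w).
Proof. by rewrite /shift addrAC => nuix w_ge0 lamxw; apply: closed; rewrite ?subrK. Qed.

Lemma shifts_union_up x w :
  shifts_union nu b x -> nonneg w -> lam (x + w) -> shifts_union nu b (x + w).
Proof. by case=> i nuix w_ge0 lamxw; exists i; apply: shift_up. Qed.

Hypothesis lam_young : young lam.

Lemma components_are_shifts (k : fieldType) :
  components_are (skew_of (skew_ideal k lam (shifts_union nu b)) (young_ideal k lam)) nu b.
Proof.
apply: components_areP => [x|i j x|i|i|i x w nuix w_ge0].
- exact: (skew_of_skew_ideal k lam_young shifts_union_young).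
- exact: shift_uniq.
- by exists (b i); rewrite /shift subrr; apply: conn_abs_skew0.
- exact/connected_shift/conn_abs_skew_connected.
- move/(skew_of_skew_ideal k lam_young shifts_union_young).
  by move/shifts_union_young; apply: shift_up.
Qed.

End ShiftedShapes.

Section ShapesToIsomorphism.
Variables (k : fieldType) (n : nat) (lam mu : zset n).
Variables (r : nat) (nu : 'I_r -> zset n) (b c : 'I_r -> zpt n).
Hypotheses (lam_young : young lam) (mu_young : young mu)
  (disj_b : cond_disj_in lam nu b) (closed_b : cond_closed lam nu b)
  (disj_c : cond_disj_in mu nu c) (closed_c : cond_closed mu nu c).
Local Notation S := {mpoly k[n]}.
Local Notation E := (shifts_union nu b).
Local Notation F := (shifts_union nu c).
Local Notation I := (young_ideal k lam).
Local Notation K := (skew_ideal k lam E).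
Local Notation J := (young_ideal k mu).
Local Notation L := (skew_ideal k mu F).
Implicit Types (u w : 'X_{1..n}) (f g : S).

Let idJ : ideal J. Proof. by case: (young_ideal_monomial k mu_young). Qed.

Lemma translation_exists : exists sig : 'X_{1..n} -> 'X_{1..n},
  forall u i, shift (nu i) (b i) (mz u) -> mz (sig u) = mz u - b i + c i.
Proof.
have : forall u, E (mz u) ->
    exists u', exists2 i, shift (nu i) (b i) (mz u) & mz u' = mz u - b i + c i.
  move=> u [i nuiu]; have nuic : shift (nu i) (c i) (mz u - b i + c i) by rewrite /shift addrK.
  have [u' Eu'] := young_mz mu_young (shift_young disj_c nuic).
  by exists u', i.
case/(partial_choice 0%MM) => sig sigE.
exists sig => u i nuiu; have [j nuju ->] := sigE u (ex_intro _ i nuiu).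
by rewrite (shift_uniq disj_b nuju nuiu).
Qed.

Variable sig : 'X_{1..n} -> 'X_{1..n}.
Hypothesis sigE : forall u i, shift (nu i) (b i) (mz u) -> mz (sig u) = mz u - b i + c i.

Lemma transl_shifts_union u : E (mz u) -> F (mz (sig u)).
Proof. by case=> i nuiu; exists i; rewrite /shift (sigE nuiu) addrK. Qed.

Lemma transl_young u : E (mz u) -> mu (mz (sig u)).
Proof. by move/transl_shifts_union/(shifts_union_young disj_c). Qed.

Lemma transl_inj u u' : E (mz u) -> E (mz u') -> sig u = sig u' -> u = u'.
Proof.
move=> [i nuiu] [j nuju] sig_uu'; have := sigE nuiu; have := sigE nuju.
have -> : j = i.
  apply: (shift_uniq disj_c (x := mz (sig u))); rewrite /shift.
    by rewrite sig_uu' (sigE nuju) addrK.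
  by rewrite (sigE nuiu) addrK.
by rewrite sig_uu' => -> /addIr/addIr/mz_inj.
Qed.

Lemma transl_surj u' : F (mz u') -> exists2 u, E (mz u) & sig u = u'.
Proof.
move=> [i nuiu']; have nuib : shift (nu i) (b i) (mz u' - c i + b i) by rewrite /shift addrK.
have [u Eu] := young_mz lam_young (shift_young disj_b nuib).
exists u; first by exists i; rewrite Eu.
by apply: mz_inj; rewrite (sigE (i := i)) Eu ?addrK ?subrK.
Qed.

Lemma transl_mulX u w : E (mz u) -> lam (mz (u + w)%MM) ->
  E (mz (u + w)%MM) /\ sig (u + w)%MM = (sig u + w)%MM.
Proof.
move=> [i nuiu] lamuw.
have nuiuw : shift (nu i) (b i) (mz (u + w)%MM).
  by rewrite mzD; apply: (shift_up closed_b) => //; [exact: mz_nonneg | rewrite -mzD].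
split; first by exists i.
apply: mz_inj; rewrite (sigE nuiuw) !mzD (sigE nuiu).
by rewrite (addrAC (mz u - b i)) (addrAC (mz u) (- b i)).
Qed.

Lemma transl_mulX_out u w : E (mz u) -> ~ lam (mz (u + w)%MM) -> ~ mu (mz (sig u + w)%MM).
Proof.
move=> [i nuiu] lam'uw muw; apply: lam'uw; apply: (shift_young disj_b (i := i)).
have := closed_c (mz_nonneg w) nuiu; rewrite -(sigE nuiu) -mzD => /(_ muw).
by rewrite /shift mzD addrAC.
Qed.

Variable El : seq 'X_{1..n}.
Hypotheses (El_uniq : uniq El) (El_E : forall u, u \in El <-> E (mz u)).

Definition transl_map f : S := \sum_(u <- El) f@_u *: 'X_[sig u].
Local Notation phi := transl_map.

Lemma transl_mapD f g : phi (f + g) = phi f + phi g.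
Proof. by rewrite /phi -big_split; apply: eq_bigr => u _; rewrite mcoeffD scalerDl. Qed.

Lemma transl_mapZ a f : phi (a *: f) = a *: phi f.
Proof. by rewrite /phi scaler_sumr; apply: eq_bigr => u _; rewrite mcoeffZ scalerA. Qed.

Lemma transl_mapX u : E (mz u) -> phi 'X_[u] = 'X_[sig u].
Proof.
move=> /El_E uEl; rewrite /phi (bigD1_seq u) //= mcoeffX eqxx scale1r big1_seq ?addr0 //.
by move=> t /andP[tu _]; rewrite mcoeffX eq_sym (negbTE tu) scale0r.
Qed.

Lemma transl_mapX_out u : ~ E (mz u) -> phi 'X_[u] = 0.
Proof.
move=> E'u; rewrite /phi big1_seq // => t /andP[_ /El_E Et]; rewrite mcoeffX.
by case: (eqVneq u t) => [ut|_]; [subst t | rewrite scale0r].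
Qed.

Lemma mcoeff_transl_map f u : E (mz u) -> (phi f)@_(sig u) = f@_u.
Proof.
move=> /El_E uEl; apply: mcoeff_sumX_inj => // t t' /El_E Et /El_E Et'.
exact: transl_inj.
Qed.

Lemma mcoeff_transl_map_out f u' : ~ F (mz u') -> (phi f)@_u' = 0.
Proof.
move=> F'u'; apply/eqP; apply: contraT => /mcoeff_sumX_neq0[u [/El_E Eu _ sigu]].
by case: F'u'; rewrite -sigu; apply: transl_shifts_union.
Qed.

Lemma transl_map_skew f : L (phi f).
Proof. by move=> u' /mcoeff_sumX_neq0[u [/El_E Eu _ <-]]; right; apply: transl_shifts_union. Qed.

Lemma transl_map_young f : I f -> J (phi f).
Proof.
move=> If u' /mcoeff_sumX_neq0[u [/El_E Eu fu _]].
by case: (If _ fu); apply: shifts_union_young disj_b _ Eu.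
Qed.

Lemma transl_map_inj f : K f -> J (phi f) -> I f.
Proof.
move=> Kf Jphif u fu; case: (Kf _ fu) => // Eu _; apply: (Jphif (sig u)).
  by rewrite mcoeff_transl_map.
exact: transl_young.
Qed.

Lemma transl_map_surj g : L g -> exists f, K f /\ J (phi f - g).
Proof.
move=> Lg; pose f := \sum_(u <- El) g@_(sig u) *: ('X_[u] : S).
exists f; split=> [u /mcoeff_sumX_neq0[t [/El_E Et _ <-]]|u']; first by right.
case: (classic (F (mz u'))) => [/transl_surj[u Eu <-]|F'u'].
  rewrite mcoeffB mcoeff_transl_map // (@mcoeff_sumX_inj _ _ _ _ _ id) ?subrr ?eqxx //.
  exact/El_E.
rewrite mcoeffB mcoeff_transl_map_out // sub0r oppr_eq0.
by case/Lg.
Qed.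

Lemma transl_map_mulX u w : K 'X_[u] -> J (phi ('X_[w] * 'X_[u]) - 'X_[w] * phi 'X_[u]).
Proof.
have E_lam := shifts_union_young disj_b.
rewrite -mpolyXD addmC /skew_ideal supp_idealX => -[lam'u|Eu].
  have E'u : ~ E (mz u) by move/E_lam.
  have E'uw : ~ E (mz (u + w)%MM) by move/E_lam/(young_mzDl lam_young).
  by rewrite transl_mapX_out // transl_mapX_out // mulr0 subrr; apply: ideal0.
rewrite (transl_mapX Eu) -mpolyXD [(w + _)%MM]addmC.
case: (classic (lam (mz (u + w)%MM))) => [lamuw|lam'uw].
  have [Euw sig_uw] := transl_mulX Eu lamuw.
  by rewrite (transl_mapX Euw) sig_uw subrr; apply: ideal0.
rewrite transl_mapX_out; last by move/E_lam.
rewrite sub0r; apply: (idealN idJ).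
by rewrite /young_ideal supp_idealX; apply: transl_mulX_out.
Qed.

Lemma transl_map_mul s f : K f -> J (phi (s * f) - s * phi f).
Proof.
move=> Kf; pose D s f := phi (s * f) - s * phi f; change (J (D s f)).
apply: (ideal_linear_image (F := D s) _ _ idJ _ Kf) => [f1 f2|a f1|u Ku].
- by rewrite /D mulrDr !transl_mapD mulrDr opprD addrACA.
- by rewrite /D -scalerAr !transl_mapZ -scalerAr scalerBr.
apply: (ideal_linear_image (F := fun s => D s 'X_[u]) (Q := fun _ => True) _ _ idJ) => // [s1 s2|a s1|w _].
- by rewrite /D mulrDl transl_mapD mulrDl opprD addrACA.
- by rewrite /D -scalerAl transl_mapZ -scalerAl scalerBr.
by apply: transl_map_mulX; rewrite /skew_ideal supp_idealX.
Qed.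

Lemma transl_map_quot_iso : quot_iso K I L J phi.
Proof.
split=> [f _||||]; [exact: transl_map_skew | split | exact: transl_map_young |
  exact: transl_map_inj | exact: transl_map_surj].
  by move=> f g _ _; rewrite transl_mapD subrr; apply: ideal0.
by move=> s f; apply: transl_map_mul.
Qed.

Lemma transl_map_sends_monomials : sends_monomials K I L J phi.
Proof.
rewrite /skew_ideal /young_ideal => m /supp_idealX[lam'm|Em] I'm.
  by case: I'm; apply/supp_idealX.
exists (sig m); split; rewrite ?supp_idealX.
- by right; apply: transl_shifts_union.
- by apply; apply: transl_young.
- by rewrite (transl_mapX Em) subrr; apply: ideal0.
Qed.

Lemma transl_map_matches : phi_matches J phi nu b c.
Proof.
move=> i v m m' nuiv Em Em'.
have nuim : shift (nu i) (b i) (mz m) by rewrite /shift Em addrK.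
have -> : m' = sig m by apply: mz_inj; rewrite (sigE nuim) Em' Em addrK.
by rewrite transl_mapX ?subrr; [apply: ideal0 | exists i].
Qed.

End ShapesToIsomorphism.

Lemma monomial_iso_of_shapes (k : fieldType) (n : nat) (lam mu : zset n)
    (r : nat) (nu : 'I_r -> zset n) (b c : 'I_r -> zpt n) :
  young lam -> young mu -> (forall i, conn_abs_skew (nu i)) ->
  cond_disj_in lam nu b -> cond_closed lam nu b ->
  cond_disj_in mu nu c -> cond_closed mu nu c ->
  exists (I K J L : pset k n) (phi : {mpoly k[n]} -> {mpoly k[n]}),
    [/\ [/\ monomial_ideal I, monomial_ideal K, monomial_ideal J, monomial_ideal L &
            psubset I K /\ psubset J L],
        [/\ fin_codim I, fin_codim J, quot_iso K I L J phi & sends_monomials K I L J phi],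
        zseteq lam (young_of I), zseteq mu (young_of J) &
        [/\ components_are (skew_of K I) nu b, components_are (skew_of L J) nu c &
            phi_matches J phi nu b c]].
Proof.
move=> lam_young mu_young nu_conn disj_b closed_b disj_c closed_c.
have [sig sigE] := translation_exists mu_young disj_b disj_c.
have [El El_uniq El_E] : exists2 El, uniq El & forall u, u \in El <-> shifts_union nu b (mz u).
  case: lam_young => [[s lam_s] _ _]; apply: (@uniq_sublist _ _ [seq mnm_of_zpt x | x <- s]).
  move=> u /(shifts_union_young disj_b)/lam_s lamu.
  by apply/mapP; exists (mz u); rewrite ?mzK.
exists (young_ideal k lam), (skew_ideal k lam (shifts_union nu b)),
  (young_ideal k mu), (skew_ideal k mu (shifts_union nu c)), (transl_map sig El).
split.
- split; try apply: young_ideal_monomial => //; last by split; apply: young_ideal_sub_skew.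
    by apply: skew_ideal_monomial => //; apply: shifts_union_up.
  by apply: skew_ideal_monomial => //; apply: shifts_union_up.
- split; try apply: fin_codim_young_ideal => //.
    exact: transl_map_quot_iso.
  exact: transl_map_sends_monomials.
- exact: young_of_young_ideal.
- exact: young_of_young_ideal.
split; try exact: components_are_shifts.
exact: transl_map_matches.
Qed.

Section IsomorphismToMatching.
Variables (k : fieldType) (n : nat) (I K J L : pset k n) (phi : {mpoly k[n]} -> {mpoly k[n]}).
Hypotheses (mI : monomial_ideal I) (mK : monomial_ideal K) (mJ : monomial_ideal J)
  (phi_iso : quot_iso K I L J phi).
Local Notation S := {mpoly k[n]}.
Local Notation X m := ('X_[m] : S).
Implicit Types (f g : S) (m w : 'X_{1..n}).

Definition std_monomial m := K (X m) /\ ~ I (X m).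

Let idI : ideal I. Proof. by case: mI. Qed.
Let idJ : ideal J. Proof. by case: mJ. Qed.
Let idK : ideal K. Proof. by case: mK. Qed.

Lemma iso_add f g : K f -> K g -> J (phi (f + g) - (phi f + phi g)).
Proof. by case: phi_iso => _ [+ _] _ _ _; apply. Qed.

Lemma iso_mul s f : K f -> J (phi (s * f) - s * phi f).
Proof. by case: phi_iso => _ [_ +] _ _ _; apply. Qed.

Lemma iso_scale c f : K f -> J (phi (c *: f) - c *: phi f).
Proof. by rewrite -!mul_mpolyC; apply: iso_mul. Qed.

Lemma iso_young f : I f -> J (phi f).
Proof. by case: phi_iso => _ _ + _ _; apply. Qed.

Lemma iso_inj f : K f -> J (phi f) -> I f.
Proof. by case: phi_iso => _ _ _ + _; apply. Qed.

Lemma iso_surj g : L g -> exists f, K f /\ J (phi f - g).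
Proof. by case: phi_iso => _ _ _ _; apply. Qed.

Lemma iso0 : J (phi 0).
Proof.
have := iso_add (ideal0 idK) (ideal0 idK); rewrite addr0 => /(idealN idJ).
by rewrite opprB addrK.
Qed.

Lemma std_monomial_map : sends_monomials K I L J phi ->
  exists sig : 'X_{1..n} -> 'X_{1..n}, forall m, std_monomial m ->
    [/\ L (X (sig m)), ~ J (X (sig m)) & J (phi (X m) - X (sig m))].
Proof.
move=> send; apply: (partial_choice 0%MM (P := std_monomial)
  (R := fun m m' => [/\ L (X m'), ~ J (X m') & J (phi (X m) - X m')])) => m [Km I'm].
by have [m' [Lm' J'm' Jm]] := send m Km I'm; exists m'.
Qed.

Variable sig : 'X_{1..n} -> 'X_{1..n}.
Hypothesis sigP : forall m, std_monomial m ->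
  [/\ L (X (sig m)), ~ J (X (sig m)) & J (phi (X m) - X (sig m))].

Lemma iso_mulX m w : std_monomial m -> J (phi (X (m + w)%MM) - X (sig m + w)%MM).
Proof.
move=> stdm; have [_ _ Jm] := sigP stdm; have [Km _] := stdm.
have := idealD idJ (iso_mul (X w) Km) (idealMl idJ (X w) Jm).
by rewrite mulrBr addrA subrK -!mpolyXD !(addmC w).
Qed.

Lemma sig_mulX m w : std_monomial m -> ~ I (X (m + w)%MM) ->
  std_monomial (m + w)%MM /\ sig (m + w)%MM = (sig m + w)%MM.
Proof.
move=> stdm I'mw; have stdmw : std_monomial (m + w)%MM.
  by split=> //; apply: monomial_idealXD; case: stdm.
split=> //; have [_ J'mw Jmw] := sigP stdmw.
apply: (monomial_ideal_eqX mJ _ J'mw).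
have -> : X (sig (m + w)%MM) - X (sig m + w)%MM =
  (phi (X (m + w)%MM) - X (sig m + w)%MM) - (phi (X (m + w)%MM) - X (sig (m + w)%MM)) by ring.
by apply: idealB => //; apply: iso_mulX.
Qed.

Lemma sig_mulX_out m w : std_monomial m -> ~ J (X (sig m + w)%MM) -> ~ I (X (m + w)%MM).
Proof.
move=> stdm J'mw Imw; apply: J'mw.
have -> : X (sig m + w)%MM = phi (X (m + w)%MM) - (phi (X (m + w)%MM) - X (sig m + w)%MM) by ring.
by apply: idealB => //; [apply: iso_young | apply: iso_mulX].
Qed.

Lemma iso_sub f g : K f -> K g -> J (phi (f - g) - (phi f - phi g)).
Proof.
move=> Kf Kg; have := idealD idJ (iso_add Kf (idealN idK Kg)) (iso_scale (-1) Kg).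
by rewrite !scaleN1r; congr J; ring.
Qed.

Lemma sig_inj m m' : std_monomial m -> std_monomial m' -> sig m = sig m' -> m = m'.
Proof.
move=> stdm stdm' sigmm'; have [_ _ Jm] := sigP stdm; have [_ _ Jm'] := sigP stdm'.
have [Km I'm] := stdm; have [Km' _] := stdm'.
apply: (monomial_ideal_eqX mI _ I'm); apply: iso_inj; first exact: idealB.
have -> : phi (X m - X m') = (phi (X m - X m') - (phi (X m) - phi (X m')))
    + (phi (X m) - X (sig m)) - (phi (X m') - X (sig m')) by rewrite sigmm'; ring.
by apply: idealB => //; apply: idealD => //; apply: iso_sub.
Qed.

Lemma iso_sum (s : seq 'X_{1..n}) (a : 'X_{1..n} -> k) :
  (forall u, u \in s -> K (X u)) ->
  exists g, J (phi (\sum_(u <- s) a u *: X u) - g) /\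
    forall u', g@_u' != 0 -> exists2 u, std_monomial u & sig u = u'.
Proof.
elim: s => [|u s IH] Ks.
  by exists 0; rewrite big_nil subr0; split=> [|u']; [exact: iso0 | rewrite mcoeff0 eqxx].
have Ku : K (X u) by apply: Ks; rewrite mem_head.
have Ks' v : v \in s -> K (X v) by move=> vs; apply: Ks; rewrite inE vs orbT.
have [g [Jg supp_g]] := IH Ks'.
set h := \sum_(v <- s) _ in Jg *; rewrite big_cons.
have Kh : K h by apply: ideal_sum => // v vs; apply: idealZ => //; apply: Ks'.
have Kau : K (a u *: X u) by apply: idealZ.
have Jadd := iso_add Kau Kh; have Jscale := iso_scale (a u) Ku.
case: (classic (I (X u))) => [Iu|I'u].
  exists g; split=> //.
  have -> : phi (a u *: X u + h) - g = (phi (a u *: X u + h) - (phi (a u *: X u) + phi h))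
    + (phi (a u *: X u) - a u *: phi (X u)) + a u *: phi (X u) + (phi h - g) by ring.
  by apply/(idealD idJ _ Jg)/(idealD idJ (idealD idJ Jadd Jscale))/(idealZ idJ)/iso_young.
have [_ _ Jsig] := sigP (conj Ku I'u).
exists (a u *: X (sig u) + g); split.
  have -> : phi (a u *: X u + h) - (a u *: X (sig u) + g) =
    (phi (a u *: X u + h) - (phi (a u *: X u) + phi h))
    + (phi (a u *: X u) - a u *: phi (X u)) + a u *: (phi (X u) - X (sig u)) + (phi h - g).
    by rewrite scalerBr; ring.
  by apply/(idealD idJ _ Jg)/(idealD idJ (idealD idJ Jadd Jscale))/(idealZ idJ).
move=> u'; rewrite mcoeffD mcoeffZ mcoeffX.
case: (eqVneq (sig u) u') => [<-|_]; first by exists u.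
by rewrite mulr0 add0r => /supp_g.
Qed.

Lemma sig_surj m' : L (X m') -> ~ J (X m') -> exists2 m, std_monomial m & sig m = m'.
Proof.
move=> Lm' J'm'; have [f [Kf Jf]] := iso_surj Lm'.
have Kf_supp u : u \in msupp f -> K (X u) by rewrite mcoeff_msupp; apply: monomial_ideal_coef.
have [g [Jg supp_g]] := iso_sum (fun u => f@_u) Kf_supp.
rewrite -mpolyE in Jg; apply: NNPP => no_preimage.
have g0 : g@_m' = 0 by apply/eqP; apply: contraT => /supp_g[m stdm sigm]; case: no_preimage; exists m.
apply: J'm'; apply: (monomial_ideal_coef mJ (f := X m' - g)).
  have -> : X m' - g = (phi f - g) - (phi f - X m') by ring.
  exact: idealB.
by rewrite mcoeffB mcoeffX eqxx g0 subr0 oner_eq0.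
Qed.

Local Notation E := (skew_of K I).
Local Notation lam := (young_of I).
Local Notation R := (clos_refl_trans (zpt n) (linked E)).

Lemma skew_of_std x : E x <-> exists2 m, mz m = x & std_monomial m.
Proof. by split=> [[m [<- Km I'm]]|[m <- [Km I'm]]]; exists m. Qed.

Definition sig_shift x := mz (sig (mnm_of_zpt x)) - x.

Lemma sig_shift_linked x y : linked E x y -> sig_shift x = sig_shift y.
Proof.
case=> /skew_of_std[m <- stdm] /skew_of_std[m' <- stdm'] [x' [y' [x'_ge0 y'_ge0 Exy Exy']]].
have [w Ew] := nonneg_mzP x'_ge0; have [w' Ew'] := nonneg_mzP y'_ge0; subst x' y'.
rewrite -!mzD in Exy Exy'; have Emw := mz_inj Exy.
case/skew_of_std: Exy' => m3 /mz_inj Em3 [_ I'mw]; subst m3.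
have [_ sig_mw] := sig_mulX stdm I'mw; rewrite Emw in I'mw.
have [_ sig_m'w'] := sig_mulX stdm' I'mw.
rewrite /sig_shift !mzK; apply: (@eq_subr_of_addr _ _ _ _ _ (mz w) (mz w')); rewrite -!mzD //.
by rewrite -sig_mw -sig_m'w' Emw.
Qed.

Lemma sig_shift_rt x y : R x y -> sig_shift x = sig_shift y.
Proof. by elim=> [x1 y1 /sig_shift_linked|//|x1 y1 z1 _ -> _ ->]. Qed.

Section SkewComponents.
Variables (r : nat) (rep : 'I_r -> zpt n).
Hypotheses (rep_skew : forall i, E (rep i)) (rep_uniq : forall i j, R (rep i) (rep j) -> i = j)
  (rep_cover : forall x, E x -> exists i, R (rep i) x).

Definition rep_comp i x := E x /\ R (rep i) x.

Lemma rep_comp_step i x y : linked E x y -> rep_comp i x -> rep_comp i y.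
Proof.
move=> lxy [_ Rx]; split; first by case: lxy.
by apply: rt_trans Rx _; apply: rt_step.
Qed.

Lemma rep_comp_up i x y : rep_comp i x -> nonneg y -> E (x + y) -> rep_comp i (x + y).
Proof.
move=> compx y_ge0 Exy; have [Ex _] := compx; apply: (rep_comp_step _ compx); split=> //.
exists y, 0; split=> //; first by move=> j; rewrite ffunE.
by rewrite addr0.
Qed.

Lemma rep_comp_connected i : connected (rep_comp i).
Proof.
move=> a c compa compc; have [[_ Ra] [_ Rc]] := (compa, compc).
have Rac : R a c by apply: rt_trans (rt_linked_sym Ra) Rc.
apply: (rt_linked_restrict _ Rac compa) => x y lxy compx; have compy := rep_comp_step lxy compx.
case: lxy => _ _ [x' [y' [x'_ge0 ? ? ?]]]; split=> //.
by exists x', y'; split=> //; apply: rep_comp_up.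
Qed.

Lemma rep_comp_uniq i j x : rep_comp i x -> rep_comp j x -> i = j.
Proof. by case=> _ Ri [_ Rj]; apply: rep_uniq; apply: rt_trans Ri (rt_linked_sym Rj). Qed.

Lemma rep_comp_cover x : E x -> exists i, rep_comp i x.
Proof. by move=> Ex; have [i Ri] := rep_cover Ex; exists i. Qed.

Hypothesis finI : fin_codim I.

(* Qualified: MathComp's sesquilinear forms also define [skew]. *)
Lemma rep_comp_skew i : Defs.skew (rep_comp i).
Proof.
have lam_young := young_of_young mI finI.
exists lam, (fun x => lam x /\ ~ rep_comp i x); split=> //.
  case: lam_young => [[s lam_s] lam_ge0 lam_down]; split.
  - by exists s => x [/lam_s].
  - by move=> x [/lam_ge0].
  move=> x y x_ge0 le_xy [lamy comp'y]; split; first exact: lam_down le_xy lamy.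
  move=> compx; apply: comp'y; rewrite -[y](subrKC x).
  have yx_ge0 := zle_subr_nonneg le_xy.
  by apply/(rep_comp_up compx yx_ge0)/(skew_of_up mK compx.1 yx_ge0); rewrite subrKC.
move=> x; split=> [compx|[lamx ncomp]]; last by apply: NNPP => comp'x; apply: ncomp.
by split=> [|[_ /(_ compx)]]; first exact: skew_of_young compx.1.
Qed.

Variable lo : 'I_r -> zpt n.
Hypotheses (lo_comp : forall i, rep_comp i (lo i))
  (lo_min : forall i v, rep_comp i v -> lexle (lo i) v).

Definition abs_comp i := shift (rep_comp i) (- lo i).

Definition sig_lo i := mz (sig (mnm_of_zpt (lo i))).

Lemma rep_comp_sig i x : rep_comp i x -> mz (sig (mnm_of_zpt x)) = x - lo i + sig_lo i.
Proof.
move=> compx; have [_ Rlo] := lo_comp i.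
have Rxlo : R x (lo i) by apply: rt_trans (rt_linked_sym compx.2) Rlo.
have := sig_shift_rt Rxlo.
by rewrite /sig_shift => /eqP; rewrite subr_eq => /eqP ->; rewrite addrC [sig_lo i - _]addrC addrA.
Qed.

Lemma shift_abs_comp i x : shift (abs_comp i) (lo i) x <-> rep_comp i x.
Proof. by rewrite /abs_comp /shift opprK subrK. Qed.

Lemma shift_abs_comp_sig i y : shift (abs_comp i) (sig_lo i) y <-> rep_comp i (y - sig_lo i + lo i).
Proof. by rewrite /abs_comp /shift opprK. Qed.

Lemma abs_comp_conn i : conn_abs_skew (abs_comp i).
Proof.
exists (rep_comp i), (lo i); split=> //; [exact: rep_comp_skew | exact: rep_comp_connected |].
exact: lo_min.
Qed.

Lemma components_skew_K : components_are E abs_comp lo.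
Proof.
apply: components_areP => [x|i j x|i|i|i x y].
- split=> [/rep_comp_cover[i compx]|[i /shift_abs_comp[]//]].
  by exists i; apply/shift_abs_comp.
- by move=> /shift_abs_comp compx /shift_abs_comp; apply: rep_comp_uniq.
- by exists (rep i); apply/shift_abs_comp; split=> //; apply: rt_refl.
- apply: (connected_translate (t := 0) (@rep_comp_connected i)) => x.
  by rewrite addr0 shift_abs_comp.
- by move=> /shift_abs_comp compx y_ge0 Exy; apply/shift_abs_comp; apply: rep_comp_up.
Qed.

Lemma rep_comp_up_sig i x y : rep_comp i x -> nonneg y ->
  young_of J (x - lo i + sig_lo i + y) -> rep_comp i (x + y).
Proof.
move=> compx y_ge0 [m' [Em' J'm']]; have [m Em stdm] := proj1 (skew_of_std x) compx.1.
have [w' Ew'] := nonneg_mzP y_ge0; subst x y.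
have Em'_sig : m' = (sig m + w')%MM.
  by apply: mz_inj; rewrite Em' mzD -(rep_comp_sig compx) mzK.
subst m'; have I'mw := sig_mulX_out stdm J'm'.
apply: rep_comp_up => //; rewrite -mzD; apply/skew_of_std; exists (m + w')%MM => //.
by split=> //; apply: monomial_idealXD; case: stdm.
Qed.

Lemma skew_L_rep_comp y : skew_of L J y <-> exists i, rep_comp i (y - sig_lo i + lo i).
Proof.
split=> [[m' [<- Lm' J'm']]|[i compx]].
  have [m stdm <-] := sig_surj Lm' J'm'.
  have [i compm] := rep_comp_cover (proj2 (skew_of_std _) (ex_intro2 _ _ m erefl stdm)).
  by exists i; rewrite -{1}(mzK m) (rep_comp_sig compm) addrK subrK.
have [m Em stdm] := proj1 (skew_of_std _) compx.1; have [Lm J'm _] := sigP stdm.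
exists (sig m); split=> //.
by rewrite -[m]mzK Em (rep_comp_sig compx) addrK subrK.
Qed.

Lemma rep_comp_sig_uniq i j y :
  rep_comp i (y - sig_lo i + lo i) -> rep_comp j (y - sig_lo j + lo j) -> i = j.
Proof.
move=> compi compj.
have [mi Emi stdi] := proj1 (skew_of_std _) compi.1.
have [mj Emj stdj] := proj1 (skew_of_std _) compj.1.
have sigi := rep_comp_sig compi; have sigj := rep_comp_sig compj.
rewrite -Emi mzK Emi addrK subrK in sigi; rewrite -Emj mzK Emj addrK subrK in sigj.
have Emij := sig_inj stdi stdj (mz_inj (etrans sigi (esym sigj))).
by apply: (rep_comp_uniq (x := mz mi)); [rewrite Emi | rewrite Emij Emj].
Qed.

Lemma components_skew_L : components_are (skew_of L J) abs_comp sig_lo.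
Proof.
apply: components_areP => [y|i j y|i|i|i y z].
- rewrite skew_L_rep_comp; split=> [[i compy]|[i /shift_abs_comp_sig compy]]; exists i => //.
  exact/shift_abs_comp_sig.
- by move=> /shift_abs_comp_sig compi /shift_abs_comp_sig; apply: rep_comp_sig_uniq.
- by exists (sig_lo i); apply/shift_abs_comp_sig; rewrite subrr add0r.
- apply: (connected_translate (t := lo i - sig_lo i) (@rep_comp_connected i)) => y.
  by rewrite shift_abs_comp_sig addrA addrAC.
move=> /shift_abs_comp_sig compy z_ge0 /skew_of_young Jyz; apply/shift_abs_comp_sig.
rewrite (addrAC y z) (addrAC (y - _) z); apply: rep_comp_up_sig => //.
by rewrite addrK subrK.
Qed.

Lemma abs_comp_matches : phi_matches J phi abs_comp lo sig_lo.
Proof.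
move=> i v m m' nuiv Em Em'.
have compm : rep_comp i (mz m) by rewrite Em; move: nuiv; rewrite /abs_comp /shift opprK.
have [m0 /mz_inj Em0 stdm] := proj1 (skew_of_std _) compm.1; subst m0.
have -> : m' = sig m by apply: mz_inj; rewrite Em' -[m]mzK (rep_comp_sig compm) Em addrK.
by case: (sigP stdm).
Qed.

Lemma abs_comp_disj_K : cond_disj_in lam abs_comp lo.
Proof.
split=> [i j ij x [/shift_abs_comp compi /shift_abs_comp compj]|i x /shift_abs_comp[Ex _]].
  by move/eqP: ij; apply; apply: rep_comp_uniq compi compj.
exact: skew_of_young Ex.
Qed.

Lemma abs_comp_closed_K : cond_closed lam abs_comp lo.
Proof.
move=> i y v y_ge0; rewrite /abs_comp /shift !opprK => compv lamvy.
by rewrite addrAC; apply: rep_comp_up => //; apply: (skew_of_up mK compv.1 y_ge0 lamvy).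
Qed.

Lemma abs_comp_disj_L : cond_disj_in (young_of J) abs_comp sig_lo.
Proof.
split=> [i j ij y [/shift_abs_comp_sig compi /shift_abs_comp_sig compj]|i y /shift_abs_comp_sig compy].
  by move/eqP: ij; apply; apply: rep_comp_sig_uniq compi compj.
by apply: (@skew_of_young _ _ L); apply/skew_L_rep_comp; exists i.
Qed.

Lemma abs_comp_closed_L : cond_closed (young_of J) abs_comp sig_lo.
Proof.
move=> i y v y_ge0; rewrite /abs_comp /shift !opprK => compv Jvy.
by rewrite addrAC; apply: rep_comp_up_sig => //; rewrite addrK.
Qed.

Lemma abs_comp_shapes :
  [/\ (forall i, conn_abs_skew (abs_comp i)), components_are E abs_comp lo,
      components_are (skew_of L J) abs_comp sig_lo, phi_matches J phi abs_comp lo sig_lo &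
      [/\ cond_disj_in lam abs_comp lo, cond_closed lam abs_comp lo,
          cond_disj_in (young_of J) abs_comp sig_lo & cond_closed (young_of J) abs_comp sig_lo]].
Proof.
split; [exact: abs_comp_conn | exact: components_skew_K | exact: components_skew_L |
  exact: abs_comp_matches | split].
- exact: abs_comp_disj_K.
- exact: abs_comp_closed_K.
- exact: abs_comp_disj_L.
- exact: abs_comp_closed_L.
Qed.

End SkewComponents.

End IsomorphismToMatching.

Lemma shapes_of_monomial_iso (k : fieldType) (n : nat) (I K J L : pset k n)
    (phi : {mpoly k[n]} -> {mpoly k[n]}) :
  monomial_ideal I -> monomial_ideal K -> monomial_ideal J -> fin_codim I ->
  quot_iso K I L J phi -> sends_monomials K I L J phi ->
  exists (r : nat) (nu : 'I_r -> zset n) (b c : 'I_r -> zpt n),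
    [/\ (forall i, conn_abs_skew (nu i)),
        components_are (skew_of K I) nu b,
        components_are (skew_of L J) nu c,
        phi_matches J phi nu b c &
        [/\ cond_disj_in (young_of I) nu b, cond_closed (young_of I) nu b,
            cond_disj_in (young_of J) nu c & cond_closed (young_of J) nu c]].
Proof.
move=> mI mK mJ finI phi_iso send.
have [sig sigP] := std_monomial_map send.
have [s std_s] := fin_codim_standard_finite mI finI.
have skew_s x : skew_of K I x -> x \in map (@mz n) s.
  by case=> m [<- _ I'm]; apply/map_f/std_s.
have [r [rep [rep_skew rep_uniq rep_cover]]] :=
  representatives (0 : zpt n) (R := clos_refl_trans _ (linked (skew_of K I)))
    (rt_refl _ _) (@rt_linked_sym _ _) skew_s.
have [lo lo_spec] : exists lo : 'I_r -> zpt n, forall i,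
    rep_comp I K rep i (lo i) /\ forall v, rep_comp I K rep i v -> lexle (lo i) v.
  apply: (choice (fun i l => rep_comp I K rep i l /\ forall v, rep_comp I K rep i v -> lexle l v)).
  move=> i; have [l compl lmin] := @lexle_min _ (rep_comp I K rep i) _ (fun x cx => skew_s x cx.1)
    (ex_intro _ (rep i) (conj (rep_skew i) (rt_refl _ _ _))).
  by exists l.
exists r, (abs_comp I K rep lo), lo, (sig_lo sig lo).
by have := abs_comp_shapes mI mK mJ phi_iso sigP rep_skew rep_uniq rep_cover finI
  (fun i => (lo_spec i).1) (fun i => (lo_spec i).2).
Qed.

Theorem corollary2p1 (k : fieldType) (n : nat) :
  (forall (I K J L : pset k n) (phi : {mpoly k[n]} -> {mpoly k[n]}),
     monomial_ideal I -> monomial_ideal K -> monomial_ideal J -> monomial_ideal L ->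
     psubset I K -> psubset J L -> fin_codim I -> fin_codim J ->
     quot_iso K I L J phi -> sends_monomials K I L J phi ->
     exists (r : nat) (nu : 'I_r -> zset n) (b c : 'I_r -> zpt n),
       [/\ (forall i, conn_abs_skew (nu i)),
           components_are (skew_of K I) nu b,
           components_are (skew_of L J) nu c,
           phi_matches J phi nu b c &
           [/\ cond_disj_in (young_of I) nu b, cond_closed (young_of I) nu b,
               cond_disj_in (young_of J) nu c & cond_closed (young_of J) nu c]])
  /\
  (forall (lam mu : zset n) (r : nat) (nu : 'I_r -> zset n) (b c : 'I_r -> zpt n),
     young lam -> young mu -> (forall i, conn_abs_skew (nu i)) ->
     cond_disj_in lam nu b -> cond_closed lam nu b ->
     cond_disj_in mu nu c -> cond_closed mu nu c ->
     exists (I K J L : pset k n) (phi : {mpoly k[n]} -> {mpoly k[n]}),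
       [/\ [/\ monomial_ideal I, monomial_ideal K, monomial_ideal J, monomial_ideal L &
               psubset I K /\ psubset J L],
           [/\ fin_codim I, fin_codim J, quot_iso K I L J phi & sends_monomials K I L J phi],
           zseteq lam (young_of I), zseteq mu (young_of J) &
           [/\ components_are (skew_of K I) nu b, components_are (skew_of L J) nu c &
               phi_matches J phi nu b c]]).
Proof.
split=> [I K J L phi mI mK mJ _ _ _ finI _|lam mu r nu b c].
  exact: shapes_of_monomial_iso.
exact: monomial_iso_of_shapes.
Qed.
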